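(* There is a duality (contravariant self-equivalence) on the category of finite-dimensional right $B'$-comodules which on string comodules is given by interchanging the letters $a_i$ and $b_i^{-1}$ for all $i$ in the string. In particular it interchanges $M(t,s)$ and $M'(t,s)$, and interchanges $N(t,s)$ and $N'(t,s)$.
   Context: $k$ is a field. $Q$ is the quiver with vertices $0,1,2,\dots$ and arrows $a_i:i\to i+1$, $b_i:i+1\to i$ ($i\ge0$); $kQ$ is its path coalgebra with vertices as group-likes $g_i$ and arrows $\alpha:h\to g$ skew-primitive ($\Delta\alpha=g\otimes\alpha+\alpha\otimes h$). $B'\subseteq kQ$ is the subcoalgebra spanned by the $g_i,a_i,b_i$ (the string coalgebra associated with the basic coalgebra of a nontrivial block of $k_\zeta[SL(2)]$ at an odd root of unity in characteristic zero). A finite-dimensional representation $V=\bigoplus_iV_i$ of $Q$ in which every composite of two arrows is zero is a right $B'$-comodule via $\rho(v)=v\otimes g_i+\sum_{\alpha:\,s(\alpha)=i}\alpha(v)\otimes\alpha$ for $v\in V_i$. For $0\le s<t$ and a word $w=w_{t-1}\cdots w_s$ with each $w_j\in\{a_j,b_j^{-1}\}$ and consecutive letters alternating in type, the string comodule $\mathrm{St}(w)$ has basis $v_s,\dots,v_t$ with $v_j\in V_j$, $a_j(v_j)=v_{j+1}$ if $w_j=a_j$, $b_j(v_{j+1})=v_j$ if $w_j=b_j^{-1}$, other arrow actions on basis vectors zero. $M(t,s)=\mathrm{St}(a_{t-1}b_{t-2}^{-1}\cdots a_{s+1}b_s^{-1})$, $M'(t,s)=\mathrm{St}(b_{t-1}^{-1}a_{t-2}\cdots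 b_{s+1}^{-1}a_s)$ ($t-s$ even), $N(t,s)=\mathrm{St}(a_{t-1}b_{t-2}^{-1}\cdots b_{s+1}^{-1}a_s)$, $N'(t,s)=\mathrm{St}(b_{t-1}^{-1}a_{t-2}\cdots a_{s+1}b_s^{-1})$ ($t-s$ odd), and $M(i,i)=M'(i,i)=kg_i$. *)

From HB Require Import structures.
From mathcomp Require Import all_boot all_order all_algebra.
Set Implicit Arguments. Unset Strict Implicit. Unset Printing Implicit Defensive.
Import GRing.Theory.
Local Open Scope ring_scope.

(* Finite-dimensional right B'-comodules are identified with finite-dimensional
   representations of the quiver Q (vertices 0,1,2,..., arrows a_i : i -> i+1,
   b_i : i+1 -> i) in which every composite of two arrows is zero.
   Vector spaces are k^(dim i), linear maps are matrices acting on ROW vectors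
   (v |-> v *m A). *)
Record qrep (k : fieldType) := QRep {
  dim  : nat -> nat;
  amap : forall i, 'M[k]_(dim i, dim i.+1);
  bmap : forall i, 'M[k]_(dim i.+1, dim i)
}.

Definition is_rep (k : fieldType) (V : qrep k) : Prop :=
  (exists N, forall i, (N <= i)%N -> dim V i = 0%N) /\
  (forall i, amap V i *m amap V i.+1 = 0) /\
  (forall i, bmap V i.+1 *m bmap V i = 0) /\
  (forall i, amap V i *m bmap V i = 0) /\
  (forall i, bmap V i *m amap V i = 0).

Definition mor (k : fieldType) (V W : qrep k) :=
  forall i, 'M[k]_(dim V i, dim W i).

Definition is_hom (k : fieldType) (V W : qrep k) (f : mor V W) : Prop :=
  forall i, amap V i *m f i.+1 = f i *m amap W i /\
            bmap V i *m f i = f i.+1 *m bmap W i.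

Definition idmor (k : fieldType) (V : qrep k) : mor V V := fun i => 1%:M.

Definition compmor (k : fieldType) (U V W : qrep k) (f : mor U V) (g : mor V W)
  : mor U W := fun i => f i *m g i.   (* first f, then g *)

Definition iso_rep (k : fieldType) (V W : qrep k) : Prop :=
  exists (f : mor V W) (g : mor W V),
    is_hom f /\ is_hom g /\
    (forall i, compmor f g i = idmor V i) /\ (forall i, compmor g f i = idmor W i).

(* String comodule St(w) for a word w = w_{t-1} ... w_s encoded by
   dir : nat -> bool, with dir j = true meaning w_j = a_j and
   dir j = false meaning w_j = b_j^{-1} (only s <= j < t matters). *)
Definition St (k : fieldType) (s t : nat) (dir : nat -> bool) : qrep k :=
  @QRep k (fun i => if (s <= i <= t)%N then 1%N else 0%N)
    (fun i => \matrix_(r, c) (if (s <= i < t)%N && dir i then 1 else 0))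
    (fun i => \matrix_(r, c) (if (s <= i < t)%N && ~~ dir i then 1 else 0)).

Definition alternating (s t : nat) (dir : nat -> bool) : Prop :=
  forall j, (s <= j)%N -> (j.+2 <= t)%N -> dir j.+1 = ~~ dir j.

Definition swapw (dir : nat -> bool) : nat -> bool := fun j => ~~ dir j.

Definition dirM (t : nat) : nat -> bool := fun j => ~~ odd (t.-1 - j).
Definition dirM' (t : nat) : nat -> bool := fun j => odd (t.-1 - j).

Definition Mst  (k : fieldType) (t s : nat) : qrep k := St k s t (dirM t).   (* t-s even *)
Definition M'st (k : fieldType) (t s : nat) : qrep k := St k s t (dirM' t).  (* t-s even *)
Definition Nst  (k : fieldType) (t s : nat) : qrep k := St k s t (dirM t).   (* t-s odd *)
Definition N'st (k : fieldType) (t s : nat) : qrep k := St k s t (dirM' t).  (* t-s odd *)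
(* M(i,i) = M'(i,i) = k g_i : one-dimensional at vertex i, all arrows zero *)
Definition Mii (k : fieldType) (i : nat) : qrep k := St k i i (fun _ => true).

Definition is_duality (k : fieldType) (Dob : qrep k -> qrep k)
  (Dmor : forall V W : qrep k, mor V W -> mor (Dob W) (Dob V)) : Prop :=
  (forall V, is_rep V -> is_rep (Dob V)) /\
  (forall V W (f : mor V W), is_rep V -> is_rep W -> is_hom f ->
      is_hom (Dmor V W f)) /\
  (forall V, is_rep V -> forall i, Dmor V V (idmor V) i = idmor (Dob V) i) /\
  (forall U V W (f : mor U V) (g : mor V W),
      is_rep U -> is_rep V -> is_rep W -> is_hom f -> is_hom g ->
      forall i, Dmor U W (compmor f g) i = compmor (Dmor V W g) (Dmor U V f) i) /\
  (forall V W (f g : mor V W), is_rep V -> is_rep W -> is_hom f -> is_hom g ->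
      (forall i, Dmor V W f i = Dmor V W g i) -> forall i, f i = g i) /\
  (forall V W (h : mor (Dob W) (Dob V)), is_rep V -> is_rep W -> is_hom h ->
      exists f : mor V W, is_hom f /\ forall i, Dmor V W f i = h i) /\
  (forall U, is_rep U -> exists V, is_rep V /\ iso_rep (Dob V) U).

(** The duality is the transpose: reversing every arrow of the quiver swaps
    the roles of [a_i] and [b_i], and on matrices acting on row vectors this
    is transposition, which is contravariant, involutive and preserves the
    zero relations. On the one-dimensional spaces of a string comodule the
    arrow [a_j] becomes [b_j] and vice versa, i.e. the letters [a_j] and
    [b_j^-1] are interchanged. *)
From Pilot Require Import Defs.
From HB Require Import structures.
From mathcomp Require Import all_boot all_order all_algebra.
Set Implicit Arguments. Unset Strict Implicit.
Import GRing.Theory.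
Local Open Scope ring_scope.

Section Duality.

Variable k : fieldType.

Definition dual_rep (V : qrep k) : qrep k :=
  @QRep k (Defs.dim V) (fun i => (bmap V i)^T) (fun i => (amap V i)^T).

Definition dual_mor (V W : qrep k) (f : mor V W) : mor (dual_rep W) (dual_rep V) :=
  fun i => (f i)^T.

Lemma iso_rep_eq_maps (d : nat -> nat)
    (a a' : forall i, 'M[k]_(d i, d i.+1)) (b b' : forall i, 'M[k]_(d i.+1, d i)) :
  (forall i, a i = a' i) -> (forall i, b i = b' i) ->
  iso_rep (QRep a b) (QRep a' b').
Proof.
move=> ea eb; exists (fun i => 1%:M), (fun i => 1%:M).
have hom_id (x x' : forall i, 'M[k]_(d i, d i.+1)) (y y' : forall i, 'M[k]_(d i.+1, d i)) :
    (forall i, x i = x' i) -> (forall i, y i = y' i) ->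
    is_hom (V := QRep x y) (W := QRep x' y') (fun i => 1%:M).
  by move=> ex ey i /=; split; rewrite mulmx1 mul1mx ?ex ?ey.
split; first exact: hom_id.
split; first by apply: hom_id => i; rewrite ?ea ?eb.
by split=> i; rewrite /compmor /idmor mulmx1.
Qed.

Lemma dual_rep_is_rep (V : qrep k) : is_rep V -> is_rep (dual_rep V).
Proof.
move=> [bounded [aa [bb [ab ba]]]]; split; first exact: bounded.
by split; [|split; [|split]] => i /=; rewrite -trmx_mul ?aa ?bb ?ab ?ba trmx0.
Qed.

Lemma dual_mor_is_hom (V W : qrep k) (f : mor V W) :
  is_hom f -> is_hom (dual_mor f).
Proof.
by move=> hf i; have [ea eb] := hf i; split; rewrite /dual_mor /= -!trmx_mul ?ea ?eb.
Qed.

Lemma dual_mor_id (V : qrep k) i : dual_mor (idmor V) i = idmor (dual_rep V) i.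
Proof. exact: trmx1. Qed.

Lemma dual_mor_comp (U V W : qrep k) (f : mor U V) (g : mor V W) i :
  dual_mor (compmor f g) i = compmor (dual_mor g) (dual_mor f) i.
Proof. exact: trmx_mul. Qed.

Lemma dual_mor_inj (V W : qrep k) (f g : mor V W) :
  (forall i, dual_mor f i = dual_mor g i) -> forall i, f i = g i.
Proof. by move=> e i; apply: trmx_inj; apply: e. Qed.

Lemma dual_morK (V W : qrep k) (h : mor (dual_rep W) (dual_rep V)) :
  is_hom h -> exists f : mor V W, is_hom f /\ forall i, dual_mor f i = h i.
Proof.
move=> hh; exists (fun i => (h i)^T); split; last by move=> i; apply: trmxK.
move=> i; have /= [ea eb] := hh i.
by split; apply: trmx_inj; rewrite !trmx_mul !trmxK ?ea ?eb.
Qed.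

Lemma dual_repK (V : qrep k) : iso_rep (dual_rep (dual_rep V)) V.
Proof. by case: V => d a b; apply: iso_rep_eq_maps => i; apply: trmxK. Qed.

Lemma dual_rep_is_duality : is_duality dual_mor.
Proof.
split; first exact: dual_rep_is_rep.
split; first by move=> V W f _ _; apply: dual_mor_is_hom.
split; first by move=> V _; apply: dual_mor_id.
split; first by move=> U V W f g *; apply: dual_mor_comp.
split; first by move=> V W f g _ _ _ _; apply: dual_mor_inj.
split; first by move=> V W h _ _; apply: dual_morK.
by move=> U rU; exists (dual_rep U); split; [apply: dual_rep_is_rep | apply: dual_repK].
Qed.

Lemma dual_St s t (dir dir' : nat -> bool) :
  (forall j, (s <= j < t)%N -> dir' j = ~~ dir j) ->
  iso_rep (dual_rep (St k s t dir)) (St k s t dir').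
Proof.
move=> e; apply: iso_rep_eq_maps => i; apply/matrixP => r c; rewrite !mxE;
  by case: (boolP (s <= i < t)%N) => //= si; rewrite e // negbK.
Qed.

End Duality.

Lemma dirM'E t j : dirM' t j = ~~ dirM t j.
Proof. by rewrite /dirM /dirM' negbK. Qed.

Theorem proposition2p3p4 (k : fieldType) :
  exists (Dob : qrep k -> qrep k)
         (Dmor : forall V W : qrep k, mor V W -> mor (Dob W) (Dob V)),
    is_duality Dmor /\
    (forall (s t : nat) (dir : nat -> bool), (s < t)%N -> alternating s t dir ->
       iso_rep (Dob (St k s t dir)) (St k s t (swapw dir))) /\
    (forall t s : nat, (s < t)%N -> ~~ odd (t - s) ->
       iso_rep (Dob (Mst k t s)) (M'st k t s) /\ iso_rep (Dob (M'st k t s)) (Mst k t s)) /\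
    (forall t s : nat, (s < t)%N -> odd (t - s) ->
       iso_rep (Dob (Nst k t s)) (N'st k t s) /\ iso_rep (Dob (N'st k t s)) (Nst k t s)) /\
    (forall i : nat, iso_rep (Dob (Mii k i)) (Mii k i)).
Proof.
have dual_MN t s : iso_rep (dual_rep (St k s t (dirM t))) (St k s t (dirM' t)) /\
                   iso_rep (dual_rep (St k s t (dirM' t))) (St k s t (dirM t)).
  by split; apply: dual_St => j _; rewrite dirM'E ?negbK.
exists (@dual_rep k), (@dual_mor k).
split; first exact: dual_rep_is_duality.
split; first by move=> s t dir _ _; apply: dual_St.
split; first by move=> t s _ _; apply: dual_MN.
split; first by move=> t s _ _; apply: dual_MN.
by move=> i; apply: dual_St => j /andP [ij ji]; have := leq_ltn_trans ij ji; rewrite ltnn.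
Qed.
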